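(* Let $M\in\mathbb R^{n\times n}$ be sufficient, $B$ a complementary basis with dictionary $D$, and let $i,j\in B$ be distinct such that $B'=(B\setminus\{i,j\})\cup\{\bar i,\bar j\}$ is a complementary basis. Then $$\dim\big(\mathcal C(B\setminus\{i\})\cap\mathcal C(B')\big)=n-1\iff D_{i\bar i}=0\ \text{ and }\ D_{j\bar i}<0 .$$
   Context: Let $M\in\mathbb R^{n\times n}$ and $A=[\,I\;\;-M\,]\in\mathbb R^{n\times 2n}$, with columns indexed by $\{1,\dots,2n\}$; for $J\subseteq\{1,\dots,2n\}$, $A_{\cdot J}$ denotes the submatrix of columns indexed by $J$. For $i\in\{1,\dots,2n\}$ the complementary index is $\bar i=i+n$ if $i\le n$ and $\bar i=i-n$ if $i>n$. A set $J$ is complementary if $i\in J$ implies $\bar i\notin J$. A complementary basis is a complementary set $B$ with $|B|=n$ and $A_{\cdot B}$ invertible; $N=\{1,\dots,2n\}\setminus B$. For a complementary set $J$, the complementary cone is $\mathcal C(J)=\{A_{\cdot J}\lambda:\lambda\ge 0\}$. For a complementary basis $B$, let $\beta=A_{\cdot B}^{-1}$ with rows indexed by $B$ (so $\beta_k A_{\cdot k'}=1$ if $k=k'$ and $0$ otherwise, for $k,k'\in B$); the dictionary of $B$ is $D=-\beta A_{\cdot N}$, with rows indexed by $B$ and columns indexed by $N$. The dimension of a convex set is the dimension of its affine hull. $M$ is column sufficient if $[z_i(Mz)_i\le 0\ \forall i]\Rightarrow[z_i(Mz)_i=0\ \forall i]$; row sufficient if $M^T$ is column sufficient; sufficient if both.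 *)

(* Real matrices are taken over an arbitrary realFieldType R
   (the paper's R^{n x n} is the instance R = reals; every notion involved is
   order-algebraic). Vectors of R^n are column vectors 'cV[R]_n; the column
   index set {1,...,2n} is 'I_(n + n) (0-based: columns 0..n-1 = I, n..2n-1 = -M). *)
From HB Require Import structures.
From mathcomp Require Import all_boot all_order all_algebra.
Set Implicit Arguments. Unset Strict Implicit. Unset Printing Implicit Defensive.
Import Order.TTheory GRing.Theory Num.Theory.
Local Open Scope ring_scope.

Section LCP.
Variable R : realFieldType.
Variable n : nat.

Definition Amat (M : 'M[R]_n) : 'M[R]_(n, n + n) := row_mx 1%:M (- M).

(* complementary index: i <-> i + n *)
Definition cmp (i : 'I_(n + n)) : 'I_(n + n) :=
  match split i with inl a => rshift n a | inr b => lshift n b end.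

Definition complementary (J : {set 'I_(n + n)}) : Prop :=
  forall i, i \in J -> cmp i \notin J.

Definition colidx (B : {set 'I_(n + n)}) (h : #|B| = n) (t : 'I_n) : 'I_(n + n) :=
  enum_val (cast_ord (esym h) t).

Definition ABmat (M : 'M[R]_n) (B : {set 'I_(n + n)}) (h : #|B| = n) : 'M[R]_n :=
  \matrix_(r < n, t < n) Amat M r (colidx h t).

Definition is_cbasis (M : 'M[R]_n) (B : {set 'I_(n + n)}) : Prop :=
  complementary B /\ exists h : #|B| = n, ABmat M h \in unitmx.

(* beta = A_{.B}^{-1}; its row indexed by k \in B *)
Definition beta (M : 'M[R]_n) (B : {set 'I_(n + n)}) (h : #|B| = n) : 'M[R]_n :=
  invmx (ABmat M h).

Definition betarow (M : 'M[R]_n) (B : {set 'I_(n + n)}) (h : #|B| = n)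
  (k : 'I_(n + n)) : 'rV[R]_n :=
  \sum_(t < n | colidx h t == k) row t (beta M h).

Definition dict (M : 'M[R]_n) (B : {set 'I_(n + n)}) (h : #|B| = n)
  (k l : 'I_(n + n)) : R :=
  - (betarow M h k *m col l (Amat M)) 0 0.

Definition ccone (M : 'M[R]_n) (J : {set 'I_(n + n)}) (x : 'cV[R]_n) : Prop :=
  exists lam : 'I_(n + n) -> R, (forall k, 0 <= lam k) /\
    x = \sum_(k in J) lam k *: col k (Amat M).

(* dimension of a convex set = dimension of its affine hull:
   S contains d+1 affinely independent points *)
Definition affdim_ge (S : 'cV[R]_n -> Prop) (d : nat) : Prop :=
  exists p : 'I_d.+1 -> 'cV[R]_n, (forall t, S (p t)) /\
    row_free (\matrix_(t < d, r < n) (p (lift ord0 t) r 0 - p ord0 r 0)).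

Definition aff_dim_eq (S : 'cV[R]_n -> Prop) (d : nat) : Prop :=
  affdim_ge S d /\ ~ affdim_ge S d.+1.

Definition col_sufficient (M : 'M[R]_n) : Prop :=
  forall z : 'cV[R]_n,
    (forall i, z i 0 * (M *m z) i 0 <= 0) -> forall i, z i 0 * (M *m z) i 0 = 0.

Definition row_sufficient (M : 'M[R]_n) : Prop := col_sufficient M^T.

Definition sufficient (M : 'M[R]_n) : Prop := col_sufficient M /\ row_sufficient M.

End LCP.

From HB Require Import structures.
From mathcomp Require Import all_boot all_order all_algebra.
Set Implicit Arguments. Unset Strict Implicit. Unset Printing Implicit Defensive.
Import Order.TTheory GRing.Theory Num.Theory.
Local Open Scope ring_scope.

(* Fix the complementary basis B, let beta = A_{.B}^{-1}, so that beta x is the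
   vector of coordinates of x in the basis A_{.B}, and put a = beta A_{.ibar};
   for k = colidx t in B the dictionary entry is D_{k ibar} = - a_t.  In these
   coordinates the cone C(B \ {i}) is {x | (beta x)_i = 0, beta x >= 0}, and a
   point of C(B') agrees in its i and j coordinates with beta (mu A_{.ibar} +
   nu A_{.jbar}) for some mu, nu >= 0.
   - Upper bound: the intersection lies in the hyperplane (beta x)_i = 0,
     hence has dimension < n (affdim_ge_kernel, affdim_ge_coord_zero).
   - Necessity: column sufficiency, applied to a kernel vector of A = [I -M]
     built from mu, nu (col_sufficient_kernel, pivot_complementarity), shows
     that a point of the intersection with (beta x)_j <> 0 forces a_i = 0 and
     a_j > 0; otherwise the intersection has codimension 2.
   - Sufficiency: if a_i = 0 < a_j, the origin, the points A_{.B} e_s for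
     s not in {i, j} and A_{.B} (a + |a| restricted off {i, j}) are n affinely
     independent points of the intersection (affdim_ge_span,
     row_free_exchange). *)

Lemma cmp_lshift n (r : 'I_n) : cmp (lshift n r) = rshift n r.
Proof. by rewrite /cmp -[lshift n r]/(unsplit (inl r)) unsplitK. Qed.

Lemma cmp_rshift n (r : 'I_n) : cmp (rshift n r) = lshift n r.
Proof. by rewrite /cmp -[rshift n r]/(unsplit (inr r)) unsplitK. Qed.

Lemma cmpK n : involutive (@cmp n).
Proof.
by move=> k; rewrite -[k]splitK; case: (split k) => r /=;
  rewrite ?cmp_lshift ?cmp_rshift ?cmp_lshift.
Qed.

Lemma cmp_inj n : injective (@cmp n).
Proof. exact: inv_inj (@cmpK n). Qed.

Lemma mul_sum_col (R : fieldType) m p (A : 'M[R]_(m, p)) (v : 'cV[R]_p) :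
  A *m v = \sum_k v k 0 *: col k A.
Proof.
apply/matrixP => r c; rewrite !mxE summxE; apply: eq_bigr => k _.
by rewrite !mxE (ord1 c) mulrC.
Qed.

Lemma row_free_rowsub (R : fieldType) m m' p (f : 'I_m' -> 'I_m) (A : 'M[R]_(m, p)) :
  injective f -> row_free A -> row_free (rowsub f A).
Proof.
move=> f_inj freeA; rewrite /row_free rowsubE mxrankMfree //.
apply/inj_row_free => v v0; apply/rowP => c.
have := congr1 (fun w : 'rV_m => w 0 (f c)) v0; rewrite !mxE => <-.
rewrite (bigD1 c) //= big1 => [|c' /negbTE c'c]; rewrite !mxE.
  by rewrite eqxx mulr1 addr0.
by rewrite (inj_eq f_inj) c'c mulr0.
Qed.

Lemma affdim_ge_kernel (R : realFieldType) n k (L : 'M[R]_(k, n))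
    (S : 'cV[R]_n -> Prop) d :
  row_free L -> (forall x, S x -> L *m x = 0) -> affdim_ge S d -> (d + k <= n)%N.
Proof.
move=> freeL SL [p [Sp freeX]].
set X := \matrix_(t, r) _ in freeX.
have LX : L *m X^T = 0.
  apply/matrixP => c t.
  have e := congr1 (fun w : 'cV_k => w c 0)
    (f_equal2 (fun u v => u - v) (SL _ (Sp (lift ord0 t))) (SL _ (Sp ord0))).
  rewrite /= subr0 -mulmxBr [RHS]mxE in e; rewrite [RHS]mxE -e !mxE.
  by apply: eq_bigr => r _; rewrite !mxE.
have := mxrank_mul_min L X^T.
by rewrite LX mxrank0 mxrank_tr (eqP freeL) (eqP freeX) leqn0 subn_eq0 addnC.
Qed.

Lemma affdim_ge_span (R : realFieldType) n d (P : 'M[R]_n) (v : 'I_d -> 'cV[R]_n)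
    (S : 'cV[R]_n -> Prop) :
  P \in unitmx -> row_free (\matrix_(t, r) v t r 0) ->
  S 0 -> (forall t, S (P *m v t)) -> affdim_ge S d.
Proof.
move=> unitP freeV S0 Sv.
pose p u := if unlift ord0 u is Some t then P *m v t else 0.
exists p; split; first by move=> u; rewrite /p; case: unlift.
have -> : \matrix_(t, r) (p (lift ord0 t) r 0 - p ord0 r 0) = (\matrix_(t, r) v t r 0) *m P^T.
  apply/matrixP => t r; rewrite !mxE /p liftK unlift_none [X in _ - X]mxE subr0.
  by rewrite mxE; apply: eq_bigr => s _; rewrite !mxE mulrC.
by rewrite /row_free mxrankMfree // row_free_unit unitmx_tr.
Qed.

Lemma row_free_exchange (R : fieldType) n d (sel : 'I_d -> 'I_n) (v : 'I_d -> 'cV[R]_n) t0 :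
  injective sel -> (forall t, t != t0 -> v t = col (sel t) 1%:M) ->
  v t0 (sel t0) 0 != 0 -> row_free (\matrix_(t, r) v t r 0).
Proof.
move=> sel_inj vE vt0; apply/inj_row_free => u u0.
have coord t : (u *m \matrix_(t, r) v t r 0) 0 (sel t) =
    u 0 t * v t (sel t) 0 + (if t == t0 then 0 else u 0 t0 * v t0 (sel t) 0).
  rewrite mxE (bigD1 t) //=; congr (_ + _); first by rewrite mxE.
  have [->|tt0] := eqVneq t t0.
    rewrite big1 // => s st0.
    by rewrite mxE vE // !mxE (inj_eq sel_inj) eq_sym (negbTE st0) mulr0.
  rewrite (bigD1 t0) 1?eq_sym //= big1 ?addr0 ?mxE //.
  move=> s /andP[st st0].
  by rewrite mxE vE // !mxE (inj_eq sel_inj) eq_sym (negbTE st) mulr0.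
have ut0 : u 0 t0 = 0.
  move: (coord t0); rewrite u0 mxE eqxx addr0 => /esym/eqP.
  by rewrite mulf_eq0 (negbTE vt0) orbF => /eqP.
apply/rowP => t; have [->|tt0] := eqVneq t t0; first by rewrite ut0 mxE.
by move: (coord t); rewrite u0 ut0 vE // (negbTE tt0) !mxE eqxx mulr1 mul0r addr0 => <-.
Qed.

Lemma col_sufficient_kernel (R : realFieldType) n (M : 'M[R]_n) (w : 'I_(n + n) -> R) :
  col_sufficient M -> Amat M *m (\col_k w k) = 0 ->
  (forall p, w p * w (cmp p) <= 0) -> forall p, w p * w (cmp p) = 0.
Proof.
move=> CS Aw0 wle0.
have top : usubmx (\col_k w k) = M *m dsubmx (\col_k w k).
  apply/eqP; rewrite -subr_eq0 -[usubmx _]mul1mx -mulNmx -mul_row_col.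
  by rewrite vsubmxK -Aw0.
have pairE r : dsubmx (\col_k w k) r 0 * (M *m dsubmx (\col_k w k)) r 0
    = w (rshift n r) * w (cmp (rshift n r)).
  by rewrite -top cmp_rshift !mxE.
have Z r : w (rshift n r) * w (cmp (rshift n r)) = 0.
  by rewrite -pairE; apply: CS => r'; rewrite pairE; apply: wle0.
move=> p; rewrite -[p]splitK; case: (split p) => r /=; last exact: Z.
by rewrite cmp_lshift mulrC -cmp_rshift Z.
Qed.

Section BasisCoordinates.
Variables (R : realFieldType) (n : nat) (M : 'M[R]_n).
Variables (B : {set 'I_(n + n)}) (h : #|B| = n).

Local Notation A := (Amat M).

Lemma colidx_inj : injective (colidx h).
Proof. by move=> s t /enum_val_inj /cast_ord_inj. Qed.

Lemma colidx_in t : colidx h t \in B.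
Proof. exact: enum_valP. Qed.

Lemma colidx_surj k : k \in B -> exists t, colidx h t = k.
Proof.
move=> kB; exists (cast_ord h (enum_rank_in kB k)).
by rewrite /colidx cast_ordK enum_rankK_in.
Qed.

Definition embedB (y : 'cV[R]_n) (k : 'I_(n + n)) : R :=
  \sum_(t | colidx h t == k) y t 0.

Lemma embedB_colidx y s : embedB y (colidx h s) = y s 0.
Proof.
rewrite /embedB (eq_bigl (pred1 s)) ?big_pred1_eq // => t.
by rewrite /= (inj_eq colidx_inj).
Qed.

Lemma embedB_notin y k : k \notin B -> embedB y k = 0.
Proof.
move=> kB; rewrite /embedB big_pred0 // => t; apply/negbTE.
by apply: contra kB => /eqP <-; apply: colidx_in.
Qed.

Lemma embedB_supp y k : embedB y k != 0 -> exists2 t, colidx h t = k & y t 0 != 0.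
Proof.
have [kB nz|/embedB_notin->] := boolP (k \in B); last by rewrite eqxx.
by have [t tk] := colidx_surj kB; exists t; rewrite // -embedB_colidx tk.
Qed.

Lemma ABmat_mul y : ABmat M h *m y = \sum_k embedB y k *: col k A.
Proof.
rewrite mul_sum_col (partition_big (colidx h) predT) //=.
apply: eq_bigr => k _; rewrite /embedB scaler_suml; apply: eq_bigr => t /eqP <-.
by congr (_ *: _); apply/matrixP => r c; rewrite !mxE.
Qed.

Lemma dict_colidx s l : dict M h (colidx h s) l = - (beta M h *m col l A) s 0.
Proof.
rewrite /dict /betarow (eq_bigl (pred1 s)); last by move=> t; rewrite /= (inj_eq colidx_inj).
by rewrite big_pred1_eq -row_mul mxE.
Qed.

Lemma ccone_sum (J : {set 'I_(n + n)}) (lam : 'I_(n + n) -> R) :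
  (forall k, 0 <= lam k) -> (forall k, lam k != 0 -> k \in J) ->
  ccone M J (\sum_k lam k *: col k A).
Proof.
move=> lam_ge0 lamJ; exists lam; split => //.
rewrite [in RHS]big_mkcond /=; apply: eq_bigr => k _.
case: ifP => // kJ; have /eqP-> : lam k == 0 by apply: contraFT kJ => /lamJ.
by rewrite scale0r.
Qed.

Lemma ccone_coord (J : {set 'I_(n + n)}) x : ccone M J x ->
  exists2 lam : 'I_(n + n) -> R, (forall k, 0 <= lam k) & forall s,
    (beta M h *m x) s 0 = \sum_(k in J) lam k * (beta M h *m col k A) s 0.
Proof.
move=> [lam [lam_ge0 ->]]; exists lam => // s.
by rewrite mulmx_sumr summxE; apply: eq_bigr => k _; rewrite -scalemxAr mxE.
Qed.

Lemma ccone_Bi_of_coord ti (y : 'cV[R]_n) :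
  (forall s, 0 <= y s 0) -> y ti 0 = 0 -> ccone M (B :\ colidx h ti) (ABmat M h *m y).
Proof.
move=> y_ge0 yti; rewrite ABmat_mul; apply: ccone_sum => k.
  by apply: sumr_ge0 => t _.
case/embedB_supp => t <- yt; rewrite in_setD1 colidx_in andbT (inj_eq colidx_inj).
by apply: contraNneq yt => ->; rewrite yti.
Qed.

Hypothesis unitB : ABmat M h \in unitmx.

Lemma beta_col_colidx t : beta M h *m col (colidx h t) A = col t 1%:M.
Proof.
have -> : col (colidx h t) A = ABmat M h *m col t 1%:M.
  apply/colP => r; rewrite !mxE (bigD1 t) //= big1 => [|s /negbTE st].
    by rewrite !mxE eqxx mulr1 addr0.
  by rewrite !mxE st mulr0.
by rewrite mulmxA /beta mulVmx // mul1mx.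
Qed.

Lemma beta_col_in k s : k \in B -> (beta M h *m col k A) s 0 = (k == colidx h s)%:R.
Proof.
move=> /colidx_surj[t <-]; rewrite beta_col_colidx !mxE.
by rewrite (inj_eq colidx_inj) eq_sym.
Qed.

Lemma affdim_ge_coord_zero k (sel : 'I_k -> 'I_n) (S : 'cV[R]_n -> Prop) d :
  injective sel -> (forall x, S x -> forall c, (beta M h *m x) (sel c) 0 = 0) ->
  affdim_ge S d -> (d + k <= n)%N.
Proof.
move=> sel_inj S0; apply: (affdim_ge_kernel (L := rowsub sel (beta M h))).
  by apply: row_free_rowsub; rewrite // row_free_unit unitmx_inv.
move=> x Sx; rewrite mul_rowsub_mx; apply/colP => c.
by rewrite mxE (S0 _ Sx) mxE.
Qed.

Lemma ccone_Bi_coord ti x : ccone M (B :\ colidx h ti) x ->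
  (beta M h *m x) ti 0 = 0 /\ forall s, 0 <= (beta M h *m x) s 0.
Proof.
case/ccone_coord => lam lam_ge0 xE; split => [|s]; rewrite xE.
  apply: big1 => k; rewrite in_setD1 => /andP[kti kB].
  by rewrite beta_col_in // (negbTE kti) mulr0.
apply: sumr_ge0 => k; rewrite in_setD1 => /andP[_ kB].
by rewrite beta_col_in // mulr_ge0 ?ler0n.
Qed.

Section PrincipalPivot.
Variables ti tj : 'I_n.
Hypothesis titj : ti != tj.
Local Notation i := (colidx h ti).
Local Notation j := (colidx h tj).
Local Notation B' := ((B :\: [set i; j]) :|: [set cmp i; cmp j]).

Lemma ccone_B'_coord x : ccone M B' x ->
  exists mu nu : R, [/\ 0 <= mu, 0 <= nu & forall s, (s == ti) || (s == tj) ->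
    (beta M h *m x) s 0
    = (beta M h *m (mu *: col (cmp i) A + nu *: col (cmp j) A)) s 0].
Proof.
case/ccone_coord => lam lam_ge0 xE.
have cij : cmp i != cmp j by rewrite (inj_eq (@cmp_inj _)) (inj_eq colidx_inj).
exists (lam (cmp i)), (lam (cmp j)); split => // s sij.
rewrite xE (bigD1 (cmp i)); last by rewrite !inE eqxx orbT.
rewrite (bigD1 (cmp j)) /=; last by rewrite !inE eqxx !orbT eq_sym.
rewrite addrA big1 ?addr0 => [|k /andP[/andP[kB' kci] kcj]].
  by rewrite mulmxDr -!scalemxAr !mxE.
move: kB'; rewrite !inE (negbTE kci) (negbTE kcj) !orbF => /andP[/norP[ki kj] kB].
rewrite beta_col_in //; case/orP: sij => /eqP->.
  by rewrite (negbTE ki) mulr0.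
by rewrite (negbTE kj) mulr0.
Qed.

Lemma ccone_B'_of_coord mu (y : 'cV[R]_n) :
  0 <= mu -> (forall s, 0 <= y s 0) -> (forall s, y s 0 != 0 -> (s != ti) && (s != tj)) ->
  ccone M B' (mu *: col (cmp i) A + ABmat M h *m y).
Proof.
move=> mu_ge0 y_ge0 y_supp.
have -> : mu *: col (cmp i) A = \sum_k ((k == cmp i)%:R * mu) *: col k A.
  rewrite (bigD1 (cmp i)) //= eqxx mul1r big1 ?addr0 // => k /negbTE->.
  by rewrite mul0r scale0r.
rewrite ABmat_mul -big_split /=.
under eq_bigr do rewrite -scalerDl.
apply: ccone_sum => k.
  by rewrite addr_ge0 ?mulr_ge0 ?ler0n //; apply: sumr_ge0.
have [->|kci] := eqVneq k (cmp i); first by rewrite !inE eqxx orbT.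
rewrite mul0r add0r => /embedB_supp[t <- yt].
have /andP[tti ttj] := y_supp _ yt.
by rewrite !inE colidx_in !(inj_eq colidx_inj) (negbTE tti) (negbTE ttj).
Qed.

Hypothesis CB : complementary B.

(* The witness is the kernel vector
   mu e_ibar + nu e_jbar - embedB y of A. *)
Lemma pivot_complementarity (CS : col_sufficient M) mu nu :
  let y := beta M h *m (mu *: col (cmp i) A + nu *: col (cmp j) A) in
  0 <= mu * y ti 0 -> 0 <= nu * y tj 0 -> mu * y ti 0 = 0 /\ nu * y tj 0 = 0.
Proof.
move=> y yi_ge0 yj_ge0.
have iB := colidx_in ti; have jB := colidx_in tj.
have ciB : cmp i \notin B := CB iB; have cjB : cmp j \notin B := CB jB.
have cij : cmp i != cmp j by rewrite (inj_eq (@cmp_inj _)) (inj_eq colidx_inj).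
pose w k := (if k == cmp i then mu else 0) + (if k == cmp j then nu else 0) - embedB y k.
have single (l : 'I_(n + n)) (z : R) : \sum_k (if k == l then z else 0) *: col k A = z *: col l A.
  rewrite (bigD1 l) //= eqxx big1 ?addr0 // => k /negbTE->.
  by rewrite scale0r.
have Aw : A *m \col_k w k = 0.
  rewrite mul_sum_col.
  under eq_bigr do rewrite mxE !scalerBl scalerDl.
  rewrite sumrB big_split /= !single -ABmat_mul /y mulmxA.
  by rewrite /beta mulmxV // mul1mx subrr.
have w_off k : k \notin B -> k != cmp i -> k != cmp j -> w k = 0.
  by move=> kB kci kcj; rewrite /w (negbTE kci) (negbTE kcj) embedB_notin // addr0 subrr.
have w_ci : w (cmp i) = mu by rewrite /w eqxx (negbTE cij) embedB_notin // addr0 subr0.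
have w_cj : w (cmp j) = nu.
  by rewrite /w eqxx eq_sym (negbTE cij) embedB_notin // add0r subr0.
have w_B t : colidx h t \in B -> w (colidx h t) = - y t 0.
  move=> tB; rewrite /w embedB_colidx.
  have -> : (colidx h t == cmp i) = false by apply: contraNF ciB => /eqP<-.
  have -> : (colidx h t == cmp j) = false by apply: contraNF cjB => /eqP<-.
  by rewrite add0r sub0r.
have w_pair p : w p * w (cmp p) <= 0.
  have [->|pi] := eqVneq p i; first by rewrite w_B // w_ci mulNr oppr_le0 mulrC.
  have [->|pj] := eqVneq p j; first by rewrite w_B // w_cj mulNr oppr_le0 mulrC.
  have [->|pci] := eqVneq p (cmp i); first by rewrite cmpK w_B // w_ci mulrN oppr_le0.
  have [->|pcj] := eqVneq p (cmp j); first by rewrite cmpK w_B // w_cj mulrN oppr_le0.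
  have [pB|pB] := boolP (p \in B); last by rewrite w_off // mul0r.
  by rewrite (w_off (cmp p)) ?mulr0 ?(inj_eq (@cmp_inj _)) //; apply: CB.
have w_prod := col_sufficient_kernel CS Aw w_pair.
move: (w_prod i) (w_prod j); rewrite !w_B // w_ci w_cj !mulNr mulrC [_ * nu]mulrC.
by move=> /eqP; rewrite oppr_eq0 => /eqP-> /eqP; rewrite oppr_eq0 => /eqP->.
Qed.

Local Notation S := (fun x => ccone M (B :\ i) x /\ ccone M B' x).
Local Notation a := (beta M h *m col (cmp i) A).

(* The intersection lies in the hyperplane (beta x)_i = 0. *)
Lemma inter_not_affdim_ge : ~ affdim_ge S n.
Proof.
move=> /(@affdim_ge_coord_zero 1 (fun=> ti)) dimS.
suff : (n + 1 <= n)%N by rewrite addn1 ltnn.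
apply: dimS => [c c' _|x [/ccone_Bi_coord[xi _] _] _]; first by rewrite !ord1.
exact: xi.
Qed.

Lemma inter_pivot_sign (CS : col_sufficient M) x :
  S x -> (beta M h *m x) tj 0 != 0 -> a ti 0 = 0 /\ 0 < a tj 0.
Proof.
move=> [/ccone_Bi_coord[xi x_ge0] /ccone_B'_coord[mu [nu [mu_ge0 nu_ge0 xE]]]] xj.
set y := beta M h *m (_ + _) in xE.
have yi : y ti 0 = 0 by rewrite -xE ?eqxx.
have yj : y tj 0 = (beta M h *m x) tj 0 by rewrite xE // eqxx orbT.
have [_] : mu * y ti 0 = 0 /\ nu * y tj 0 = 0.
  by apply: pivot_complementarity => //; rewrite ?yi ?mulr0 ?yj ?mulr_ge0.
rewrite yj => /eqP; rewrite mulf_eq0 (negbTE xj) orbF => /eqP nu0.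
have ya s : y s 0 = mu * a s 0 by rewrite /y nu0 scale0r addr0 -scalemxAr mxE.
have xj_pos : 0 < (beta M h *m x) tj 0 by rewrite lt_def xj x_ge0.
have mu_pos : 0 < mu.
  by rewrite lt_def mu_ge0 andbT; apply: contraNneq xj => mu0; rewrite -yj ya mu0 mul0r.
split; last by rewrite -(pmulr_rgt0 _ mu_pos) -ya yj.
by apply/eqP; move: yi; rewrite ya => /eqP; rewrite mulf_eq0 (gt_eqF mu_pos).
Qed.

(* Hence dimension n - 1 forces that sign pattern: otherwise both coordinates
   i and j vanish on the intersection. *)
Lemma inter_affdim_pivot (CS : col_sufficient M) :
  affdim_ge S n.-1 -> a ti 0 = 0 /\ 0 < a tj 0.
Proof.
move=> dimS; have [/andP[/eqP ai aj] //|not_pivot] := boolP ((a ti 0 == 0) && (0 < a tj 0)).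
have n_gt0 : (0 < n)%N := leq_ltn_trans (leq0n ti) (ltn_ord ti).
suff : (n.-1 + 2 <= n)%N by rewrite addn2 prednK // ltnn.
apply: (affdim_ge_coord_zero (sel := fun c : 'I_2 => if c == ord0 then ti else tj)) dimS.
  by move=> [[|[|c]] ?] [[|[|c']] ?] //= e; apply: val_inj => //; move: titj; rewrite e eqxx.
move=> x Sx c; have [/ccone_Bi_coord[xi _] _] := Sx; case: ifP => // _.
apply/eqP; apply: contraNT not_pivot => xj.
by have [-> ->] := inter_pivot_sign CS Sx xj; rewrite eqxx.
Qed.

(* Conversely, under that sign pattern the origin, A_{.B} e_s (s not in {i, j})
   and A_{.B} (a + c), with c = |a| off {i, j}, are n affinely independent
   points of the intersection. *)
Lemma inter_affdim_ge : a ti 0 = 0 -> 0 < a tj 0 -> affdim_ge S n.-1.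
Proof.
move=> ai aj; have [t0 t0j _] := unlift_some titj.
pose c : 'cV[R]_n := \col_s (if (s != ti) && (s != tj) then `|a s 0| else 0).
have c_ge0 s : 0 <= c s 0 by rewrite mxE; case: ifP.
have c_supp s : c s 0 != 0 -> (s != ti) && (s != tj) by rewrite mxE; case: ifP; rewrite ?eqxx.
pose v t := if t == t0 then a + c else col (lift ti t) 1%:M.
apply: (affdim_ge_span (P := ABmat M h) (v := v)) => //.
- apply: (row_free_exchange (sel := lift ti) (t0 := t0)) => [|t /negbTE tt0|].
  + exact: lift_inj.
  + by rewrite /v tt0.
  + by rewrite /v eqxx -t0j mxE [c _ _]mxE eqxx andbF addr0 gt_eqF.
- by split; exists (fun=> 0); split => //; rewrite big1 // => k _; rewrite scale0r.
- move=> t; rewrite /v; case: eqP => [_|/eqP tt0]; split.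
  + apply: ccone_Bi_of_coord => [s|]; last by rewrite mxE [c _ _]mxE eqxx /= addr0 ai.
    rewrite mxE [c _ _]mxE; case: ifP => [_|/negbT].
      by rewrite -lerBlDr sub0r; apply: lerNnormlW.
    by rewrite negb_and !negbK => /orP[] /eqP->; rewrite addr0 ?ai // ltW.
  + rewrite mulmxDr mulmxA /beta mulmxV // mul1mx -[col _ A]scale1r.
    exact: ccone_B'_of_coord.
  + apply: ccone_Bi_of_coord => [s|]; rewrite !mxE ?ler0n //.
    by rewrite (negbTE (neq_lift ti t)).
  + rewrite -[ABmat M h *m _]add0r -(scale0r (col (cmp i) A)).
    apply: ccone_B'_of_coord => // [s|s]; rewrite !mxE ?ler0n //.
    have [-> _|_] := eqVneq s (lift ti t); last by rewrite eqxx.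
    by rewrite eq_sym neq_lift t0j (inj_eq (@lift_inj _ ti)).
Qed.

End PrincipalPivot.

End BasisCoordinates.

Theorem mainTheorem3 (R : realFieldType) (n : nat) (M : 'M[R]_n)
  (B : {set 'I_(n + n)}) (h : #|B| = n) (i j : 'I_(n + n)) :
  sufficient M ->
  complementary B -> ABmat M h \in unitmx ->
  i \in B -> j \in B -> i != j ->
  is_cbasis M ((B :\: [set i; j]) :|: [set cmp i; cmp j]) ->
  aff_dim_eq (fun x => ccone M (B :\ i) x /\
                       ccone M ((B :\: [set i; j]) :|: [set cmp i; cmp j]) x)
             (n - 1)%N
  <-> (dict M h i (cmp i) = 0 /\ dict M h j (cmp i) < 0).
Proof.
move=> [colsuff _] CB unitB /(colidx_surj h)[ti <-] /(colidx_surj h)[tj <-].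
move=> ij _; have titj : ti != tj by apply: contraNneq ij => ->.
have n_gt0 : (0 < n)%N := leq_ltn_trans (leq0n ti) (ltn_ord ti).
rewrite !dict_colidx oppr_lt0 subn1.
split => [[dimS _]|[/eqP ai aj]].
  by have [-> ?] := inter_affdim_pivot unitB titj CB colsuff dimS; rewrite oppr0.
split; first by apply: inter_affdim_ge => //; apply/eqP; rewrite -oppr_eq0 ai.
by rewrite prednK //; apply: inter_not_affdim_ge.
Qed.
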